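(* Let $\mathsf{KEM}_{\mathrm{eph}}$ be a $\delta_{\mathrm{eph}}$-correct key encapsulation mechanism and $\mathsf{KEM}_{\mathrm{stat}}$ a $\delta_{\mathrm{stat}}$-correct key encapsulation mechanism, and let $\Pi=(\mathsf{Init},\mathsf{SendM1},\mathsf{SendM2})$ be the authenticated key exchange protocol with QKD oracle described in the context, built from these KEMs, a key-derivation function $\mathsf{KDF}$ and two MACs $\mathsf{MAC}^{(qkd)},\mathsf{MAC}^{(pqc)}$. Then $\Pi$ is a $(\delta_{\mathrm{eph}}+2\delta_{\mathrm{stat}})$-correct AKE: for any two completed sessions $\mathit{sid}$ and $\mathit{sid}'$ of $\Pi$ that match each other and whose QKD key identifier has not been corrupted, $$\Pr[\text{session key of } \mathit{sid} \neq \text{session key of } \mathit{sid}'] \le \delta_{\mathrm{eph}}+2\delta_{\mathrm{stat}}.$$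
   Context: A KEM is a triple $(\mathsf{KeyGen},\mathsf{Encaps},\mathsf{Decaps})$; it is $\delta$-correct if for $(pk,sk)\leftarrow\mathsf{KeyGen}()$ and $(c,k)\leftarrow\mathsf{Encaps}(pk)$ one has $\Pr[\mathsf{Decaps}(sk,c)\neq k]\le\delta$. Parties $i$ hold static key pairs $(pk_i,sk_i)$ of $\mathsf{KEM}_{\mathrm{stat}}$. QKD oracle: for each session $\mathit{sid}$ the protocol may call $\mathsf{QKD\text{-}GET\text{-}KEY}(\mathit{sid},\ell_{qkd})$, which returns a key identifier $\mathit{kid}$ and a key $k_{qkd}$ of length $\ell_{qkd}$, and $\mathsf{QKD\text{-}GET\text{-}KEY\text{-}WITH\text{-}ID}(\mathit{sid},\mathit{kid})$, which returns the key stored under $\mathit{kid}$ for the corresponding peer, or $\bot$. A key identifier is ''corrupted'' if the adversary has overridden the key stored under it; for an uncorrupted identifier both calls give the same key. Protocol $\Pi$ (destructuring assignments mean: parse, and abort the session on wrong format; $(x\|y):=k$ splits $k$ so that $x$ has the length of a MAC key and $y$ is the rest): $\mathsf{Combine}(i_I,i_R,t,k_{qkd},k_{pqc})$: $(k_{qkd,m}\|k_{qkd,s}):=k_{qkd}$; $(k_{pqc,m}\|k_{pqc,s}):=k_{pqc}$; $k_{sess}:=k_{qkd,s}\oplus k_{pqc,s}$; $\tau_1:=\mathsf{MAC}^{(qkd)}_{k_{qkd,m}}((t,i_I,i_R))$; $\tau_2:=\mathsf{MAC}^{(pqc)}_{k_{pqc,m}}((t,\tau_1,i_I,i_R))$;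 return $(k_{sess},\tau_1,\tau_2)$. $\mathsf{Init}(pk_j)$ (initiator, peer $j$): $(c_b,k_b)\leftarrow\mathsf{Encaps}_{\mathrm{stat}}(pk_j)$; $(pk_e,sk_e)\leftarrow\mathsf{KeyGen}_{\mathrm{eph}}()$; $m_1:=(c_b,pk_e)$; state $s:=(k_b,sk_e,m_1)$; output $(m_1,s)$. $\mathsf{SendM1}(i,sk_i,j,pk_j,m_1)$ (responder $i$, peer $j$, session $\mathit{sid}$): $(c_b,pk_e):=m_1$; $k_b':=\mathsf{Decaps}_{\mathrm{stat}}(sk_i,c_b)$; $(c_a,k_a)\leftarrow\mathsf{Encaps}_{\mathrm{stat}}(pk_j)$; $(c_e,k_e)\leftarrow\mathsf{Encaps}_{\mathrm{eph}}(pk_e)$; $k_{pqc}:=\mathsf{KDF}(k_b',k_a,k_e)$; $(\mathit{kid},k_{qkd})\leftarrow\mathsf{QKD\text{-}GET\text{-}KEY}(\mathit{sid},\ell_{qkd})$; $t:=(m_1,(c_a,c_e,\mathit{kid}))$; $(k_{sess},\tau_1,\tau_2):=\mathsf{Combine}(j,i,t,k_{qkd},k_{pqc})$; $m_2:=(c_a,c_e,\mathit{kid},\tau_1,\tau_2)$; output $(m_2,k_{sess})$. $\mathsf{SendM2}(i,sk_i,j,s,m_2)$ (initiator $i$, peer $j$, session $\mathit{sid}$): $(c_a,c_e,\mathit{kid},\tau_1',\tau_2'):=m_2$; $(k_b,sk_e,m_1):=s$; $k_a':=\mathsf{Decaps}_{\mathrm{stat}}(sk_i,c_a)$; $k_e':=\mathsf{Decaps}_{\mathrm{eph}}(sk_e,c_e)$;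 $k_{pqc}:=\mathsf{KDF}(k_b,k_a',k_e')$; $k_{qkd}:=\mathsf{QKD\text{-}GET\text{-}KEY\text{-}WITH\text{-}ID}(\mathit{sid},\mathit{kid})$, abort if $\bot$; $t:=(m_1,(c_a,c_e,\mathit{kid}))$; $(k_{sess},\tau_1,\tau_2):=\mathsf{Combine}(i,j,t,k_{qkd},k_{pqc})$; abort if $\tau_1\ne\tau_1'$ or $\tau_2\neq\tau_2'$; output $k_{sess}$. Two sessions match if they have opposite roles (one initiator, one responder), each one's owner is the other's peer, and they have the same transcript $(m_1,m_2)$. *)

From HB Require Import structures.
From mathcomp Require Import all_boot all_order all_algebra.
Set Implicit Arguments. Unset Strict Implicit. Unset Printing Implicit Defensive.
Import Order.TTheory GRing.Theory Num.Theory.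
Local Open Scope ring_scope.

Definition pr (R : numFieldType) (T : finType) (E : pred T) : R :=
  #|[pred x | E x]|%:R / #|T|%:R.

(* A KEM whose probabilistic algorithms take uniform coins from finite types. *)
Record KEM := Kem {
  kem_pk : Type;
  kem_sk : Type;
  kem_ct : Type;
  kem_key : eqType;
  kem_kgcoins : finType;
  kem_enccoins : finType;
  KeyGen : kem_kgcoins -> kem_pk * kem_sk;
  Encaps : kem_pk -> kem_enccoins -> kem_ct * kem_key;
  Decaps : kem_sk -> kem_ct -> kem_key
}.

Definition kem_correct (R : numFieldType) (K : KEM) (delta : R) : Prop :=
  pr R [pred r : kem_kgcoins K * kem_enccoins K |
          let: (pk, sk) := KeyGen r.1 in
          let: (c, k) := Encaps pk r.2 in
          Decaps sk c != k] <= delta.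

Definition bits := seq bool.
Definition xor_bits (a b : bits) : bits := [seq x.1 (+) x.2 | x <- zip a b].

Section Protocol.
Variables (Ks Ke : KEM) (I : Type) (Kid : Type) (Tag1 Tag2 : eqType).
(* lengths of the MAC keys of MAC^(qkd) and MAC^(pqc) *)
Variables (lq lp : nat).
Variable KDF : kem_key Ks -> kem_key Ks -> kem_key Ke -> bits.

Definition msg1 := (kem_ct Ks * kem_pk Ke)%type.
Definition transcript := (msg1 * (kem_ct Ks * kem_ct Ke * Kid))%type.
Definition msg2 := (kem_ct Ks * kem_ct Ke * Kid * Tag1 * Tag2)%type.
Definition init_state := (kem_key Ks * kem_sk Ke * msg1)%type.

Variable MACq : bits -> transcript * I * I -> Tag1.
Variable MACp : bits -> transcript * Tag1 * I * I -> Tag2.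

Definition Combine (iI iR : I) (t : transcript) (kqkd kpqc : bits)
  : option (bits * Tag1 * Tag2) :=
  if (lq <= size kqkd)%N && (lp <= size kpqc)%N then
    let kqm := take lq kqkd in let kqs := drop lq kqkd in
    let kpm := take lp kpqc in let kps := drop lp kpqc in
    let ksess := xor_bits kqs kps in
    let tau1 := MACq kqm (t, iI, iR) in
    let tau2 := MACp kpm (t, tau1, iI, iR) in
    Some (ksess, tau1, tau2)
  else None.

Definition Init (pkj : kem_pk Ks) (r : kem_enccoins Ks * kem_kgcoins Ke)
  : msg1 * init_state :=
  let: (cb, kb) := Encaps pkj r.1 in
  let: (pke, ske) := KeyGen r.2 in
  let m1 := (cb, pke) in
  (m1, (kb, ske, m1)).

(* SendM1 by responder i with peer j; (kid, kqkd) is the output of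
   QKD-GET-KEY(sid, l_qkd); coins for Encaps_stat and Encaps_eph. *)
Definition SendM1 (i : I) (ski : kem_sk Ks) (j : I) (pkj : kem_pk Ks)
  (m1 : msg1) (kid : Kid) (kqkd : bits)
  (r : kem_enccoins Ks * kem_enccoins Ke) : option (msg2 * bits) :=
  let: (cb, pke) := m1 in
  let kb' := Decaps ski cb in
  let: (ca, ka) := Encaps pkj r.1 in
  let: (ce, ke) := Encaps pke r.2 in
  let kpqc := KDF kb' ka ke in
  let t : transcript := (m1, (ca, ce, kid)) in
  match Combine j i t kqkd kpqc with
  | Some (ksess, tau1, tau2) => Some ((ca, ce, kid, tau1, tau2), ksess)
  | None => None
  end.

(* SendM2 by initiator i with peer j; qget models
   QKD-GET-KEY-WITH-ID(sid, .), None standing for bottom. *)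
Definition SendM2 (i : I) (ski : kem_sk Ks) (j : I) (s : init_state)
  (m2 : msg2) (qget : Kid -> option bits) : option bits :=
  let: (ca, ce, kid, tau1', tau2') := m2 in
  let: (kb, ske, m1) := s in
  let ka' := Decaps ski ca in
  let ke' := Decaps ske ce in
  let kpqc := KDF kb ka' ke' in
  match qget kid with
  | None => None
  | Some kqkd =>
    let t : transcript := (m1, (ca, ce, kid)) in
    match Combine i j t kqkd kpqc with
    | Some (ksess, tau1, tau2) =>
        if (tau1 == tau1') && (tau2 == tau2') then Some ksess else None
    | None => None
    end
  end.

End Protocol.

(* The random coins of one honest run: static key-generation coins for every
   party, Init coins of the initiator, SendM1 coins of the responder. *)
Definition run_coins (Ks Ke : KEM) (I : finType) :=
  ({ffun I -> kem_kgcoins Ks} * (kem_enccoins Ks * kem_kgcoins Ke)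
    * (kem_enccoins Ks * kem_enccoins Ke))%type.

(* Bad event for a pair of matching sessions (initiator i with peer j,
   responder j with peer i, same transcript (m1, m2)): both sessions complete
   and their session keys differ. *)
Definition keys_differ (Ks Ke : KEM) (I : finType) (Kid : Type)
  (Tag1 Tag2 : eqType) (lq lp : nat)
  (KDF : kem_key Ks -> kem_key Ks -> kem_key Ke -> bits)
  (MACq : bits -> transcript Ks Ke Kid * I * I -> Tag1)
  (MACp : bits -> transcript Ks Ke Kid * Tag1 * I * I -> Tag2)
  (kid : Kid) (kqkd : bits) (qget : Kid -> option bits)
  (i j : I) : pred (run_coins Ks Ke I) :=
  fun rc =>
    let: (rs, rI, rR) := rc in
    let pk p := (KeyGen (rs p)).1 in
    let sk p := (KeyGen (rs p)).2 in
    let: (m1, s) := Init (Ke:=Ke) (pk j) rI in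
    match SendM1 lq lp KDF MACq MACp j (sk j) i (pk i) m1 kid kqkd rR with
    | None => false
    | Some (m2, kR) =>
      match SendM2 lq lp KDF MACq MACp i (sk i) j s m2 qget with
      | None => false
      | Some kI => kI != kR
      end
    end.

(* If the three decapsulations of an honest run (the responder's of c_b, the
   initiator's of c_a and of the ephemeral c_e) all succeed, both parties call
   Combine on the same transcript, QKD key and PQC key, so the initiator
   recomputes exactly the responder's tags and session key.  Each failure event
   depends on the coins of the run only through one (key-generation,
   encapsulation) coin pair, and the projection onto that pair has fibres of
   equal size, so it has at most the failure probability of the KEM; a union
   bound over the three events gives d_eph + 2 d_stat. *)

From mathcomp Require Import all_boot all_order all_algebra.
From mathcomp Require Import lra.
Import Order.TTheory GRing.Theory Num.Theory.

Definition balanced {T U : finType} (f : T -> U) (c : nat) : Prop :=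
  forall u, #|[pred x | f x == u]| = c.

Lemma card_comp_balanced {T U : finType} {f : T -> U} {c} (E : pred U) :
  balanced f c -> #|[pred x | E (f x)]| = (c * #|[pred u | E u]|)%N.
Proof.
move=> bal_f; rewrite mulnC -sum_nat_const -sum1_card (partition_big f E) //=.
apply: eq_big => [u|u Eu]; first by rewrite inE.
rewrite -(bal_f u) -sum1_card; apply: eq_bigl => x.
by rewrite !inE andb_idl // => /eqP ->.
Qed.

Lemma balanced_comp {T U V : finType} {f : T -> U} {g : U -> V} {c d} :
  balanced f c -> balanced g d -> balanced (g \o f) (c * d).
Proof.
by move=> bal_f bal_g w; rewrite -(bal_g w); apply: card_comp_balanced.
Qed.

Lemma balanced_pair {T1 T2 U1 U2 : finType} {f : T1 -> U1} {g : T2 -> U2} {c d} :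
  balanced f c -> balanced g d ->
  balanced (fun x : T1 * T2 => (f x.1, g x.2)) (c * d).
Proof.
move=> bal_f bal_g [u v]; rewrite -(bal_f u) -(bal_g v) -cardX.
by apply: eq_card => -[x y]; rewrite !inE xpair_eqE.
Qed.

Lemma balanced_fst {T U : finType} : balanced (@fst T U) #|U|.
Proof.
move=> t; rewrite -[#|U|]mul1n -(card1 t) -cardX.
by apply: eq_card => -[x y]; rewrite !inE andbT.
Qed.

Lemma balanced_snd {T U : finType} : balanced (@snd T U) #|T|.
Proof.
move=> u; rewrite -[#|T|]muln1 -(card1 u) -cardX.
by apply: eq_card => -[x y]; rewrite !inE.
Qed.

Lemma balanced_ffun_app {I K : finType} (j : I) :
  balanced (fun f : {ffun I -> K} => f j) (#|K| ^ #|I|.-1).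
Proof.
move=> k; pose F x := if x == j then pred1 k else predT.
have -> : #|[pred f : {ffun I -> K} | f j == k]| = #|family F|.
  apply: eq_card => f; rewrite !inE; apply/eqP/familyP => [fj x|/(_ j)].
    by rewrite /F; case: eqP => [->|]; rewrite ?fj ?inE.
  by rewrite /F eqxx inE => /eqP.
rewrite card_family foldrE big_map big_enum (bigD1 j) //= /F eqxx card1 mul1n.
rewrite -(cardC1 j) -prod_nat_const; apply: eq_bigr => x /negbTE ->.
by rewrite cardT.
Qed.

Local Open Scope ring_scope.

Section Probability.
Variable R : realFieldType.

Lemma pr_le {T : finType} (A B : pred T) :
  (forall x, A x -> B x) -> pr R A <= pr R B.
Proof.
move=> AB; rewrite ler_wpM2r ?invr_ge0 // ler_nat.
by apply/subset_leq_card/subsetP => x; rewrite !inE => /AB.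
Qed.

Lemma pr_orb_le {T : finType} (A B : pred T) :
  pr R [pred x | A x || B x] <= pr R A + pr R B.
Proof.
rewrite -mulrDl ler_wpM2r ?invr_ge0 // -natrD ler_nat -(cardUI A B).
apply: leq_trans (leq_addr _ _); apply/subset_leq_card/subsetP => x.
by rewrite !inE.
Qed.

(* Only an inequality: for empty T the left side is the junk value 0. *)
Lemma pr_comp_le {T U : finType} {f : T -> U} {c} (E : pred U) :
  balanced f c -> pr R (E \o f) <= pr R E.
Proof.
move=> bal_f; rewrite /pr (card_comp_balanced E bal_f).
have -> : #|T| = (c * #|U|)%N.
  by rewrite -(card_comp_balanced predT bal_f); apply: eq_card.
have [->|c_neq0] := eqVneq c 0%N; first by rewrite !mul0n mul0r divr_ge0.
by rewrite !natrM invfM mulrACA divff ?mul1r // pnatr_eq0.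
Qed.

End Probability.

Definition decaps_fails (K : KEM) : pred (kem_kgcoins K * kem_enccoins K) :=
  fun r =>
    let: (pk, sk) := KeyGen r.1 in
    let: (c, k) := Encaps pk r.2 in
    Decaps sk c != k.

Section HonestRun.
Context {Ks Ke : KEM} {I : finType} {Kid : Type} {Tag1 Tag2 : eqType} {lq lp : nat}.
Context {KDF : kem_key Ks -> kem_key Ks -> kem_key Ke -> bits}.
Context {MACq : bits -> transcript Ks Ke Kid * I * I -> Tag1}.
Context {MACp : bits -> transcript Ks Ke Kid * Tag1 * I * I -> Tag2}.
Context {kid : Kid} {kqkd : bits} {qget : Kid -> option bits}.
Hypothesis kid_uncorrupted : qget kid = Some kqkd.

Lemma keys_differ_decaps_fails (i j : I) (rc : run_coins Ks Ke I) :
  keys_differ lq lp KDF MACq MACp kid kqkd qget i j rc ->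
  [|| decaps_fails Ks (rc.1.1 j, rc.1.2.1), decaps_fails Ks (rc.1.1 i, rc.2.1)
    | decaps_fails Ke (rc.1.2.2, rc.2.2)].
Proof.
case: rc => [[rs [cb_coins ke_coins]] [ca_coins ce_coins]] /=.
rewrite /keys_differ /decaps_fails /Init /SendM1 /SendM2 /=.
case: (KeyGen (rs j)) => pkj skj; case: (KeyGen (rs i)) => pki ski /=.
case: (Encaps pkj cb_coins) => cb kb; case: (KeyGen ke_coins) => pke ske /=.
case: (Encaps pki ca_coins) => ca ka; case: (Encaps pke ce_coins) => ce ke /=.
apply: contraLR; rewrite !negb_or !negbK => /and3P[/eqP-> /eqP dec_a /eqP dec_e].
case combined: Combine => [[[ksess tau1] tau2]|] //=.
by rewrite dec_a dec_e kid_uncorrupted combined /= !eqxx /= eqxx.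
Qed.

End HonestRun.

Theorem mainTheorem1 (R : realFieldType) (Ks Ke : KEM) (d_stat d_eph : R)
  (Hstat : kem_correct Ks d_stat) (Heph : kem_correct Ke d_eph)
  (I : finType) (Kid : Type) (Tag1 Tag2 : eqType) (lq lp : nat)
  (KDF : kem_key Ks -> kem_key Ks -> kem_key Ke -> bits)
  (MACq : bits -> transcript Ks Ke Kid * I * I -> Tag1)
  (MACp : bits -> transcript Ks Ke Kid * Tag1 * I * I -> Tag2)
  (kid : Kid) (kqkd : bits) (qget : Kid -> option bits)
  (Hkid_uncorrupted : qget kid = Some kqkd)
  (i j : I) :
  @pr R _ (keys_differ lq lp KDF MACq MACp kid kqkd qget i j)
    <= d_eph + 2 * d_stat.
Proof.
pose fail_b := decaps_fails Ks \o fun rc : run_coins Ks Ke I => (rc.1.1 j, rc.1.2.1).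
pose fail_a := decaps_fails Ks \o fun rc : run_coins Ks Ke I => (rc.1.1 i, rc.2.1).
pose fail_e := decaps_fails Ke \o fun rc : run_coins Ks Ke I => (rc.1.2.2, rc.2.2).
have pr_b : pr R fail_b <= d_stat := le_trans (pr_comp_le R _
  (balanced_comp balanced_fst (balanced_pair (balanced_ffun_app j) balanced_fst))) Hstat.
have pr_a : pr R fail_a <= d_stat := le_trans (pr_comp_le R _
  (balanced_pair (balanced_comp balanced_fst (balanced_ffun_app i)) balanced_fst)) Hstat.
have pr_e : pr R fail_e <= d_eph := le_trans (pr_comp_le R _
  (balanced_pair (balanced_comp balanced_snd balanced_snd) balanced_snd)) Heph.
have pr_ae := pr_orb_le R fail_a fail_e.
have pr_bae := pr_orb_le R fail_b [pred rc | fail_a rc || fail_e rc].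
apply: le_trans (pr_le R _ _ (keys_differ_decaps_fails Hkid_uncorrupted i j)) _.
apply: le_trans pr_bae _; lra.
Qed.
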